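(* Let $T\in\mathcal{T}$, let $v_1,v_2\in A_T$ with $N_T(v_1)=\{u_1,u_2,u_5\}$ and $N_T(v_2)=\{u_3,u_4,u_5\}$, and let $T'$ arise from $T$ by contracting all six edges incident with $v_1$ or $v_2$ into a single new vertex $w$. Then $T'\in\mathcal{T}$, $D_{T'}=\{w\}\cup (D_T\setminus (N_T(v_1)\cup N_T(v_2)))$, and $A_{T'}=A_T\setminus\{v_1,v_2\}$.
   Context: Gallai–Edmonds sets: for a graph $G$, $D_G$ is the set of vertices not covered by at least one maximum matching, $A_G=N_G(D_G)\setminus D_G$, $C_G=V(G)\setminus(A_G\cup D_G)$. $\nu$ denotes the matching number, $n(T)$ the number of vertices. $\mathcal{T}$ is the set of all trees $T$ such that every vertex of $A_T$ has degree at most $3$ in $T$ and $\nu(T)=\frac{n(T)-1}{3}$. *)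

From HB Require Import structures.
From mathcomp Require Import all_boot.
Set Implicit Arguments. Unset Strict Implicit. Unset Printing Implicit Defensive.

Section Graphs.
Variables (T : finType) (e : rel T).

Definition nbhd (x : T) : {set T} := [set y | e x y].
Definition nbhdS (S : {set T}) : {set T} := [set y | [exists x in S, e x y]].
Definition deg (x : T) : nat := #|nbhd x|.

Definition is_tree : Prop :=
  [/\ symmetric e, irreflexive e, 0 < #|T|,
      (forall x y, connect e x y) &
      ~ (exists c : seq T, [&& uniq c, 2 < size c & cycle e c])].

Definition matching (M : {set {set T}}) : bool :=
  [forall E in M, [exists x, exists y, e x y && (E == [set x; y])]] && trivIset M.

Definition nu : nat := \max_(M : {set {set T}} | matching M) #|M|.

Definition max_matching (M : {set {set T}}) : bool := matching M && (#|M| == nu).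

Definition GE_D : {set T} :=
  [set x | [exists M, max_matching M && (x \notin cover M)]].
Definition GE_A : {set T} := nbhdS GE_D :\: GE_D.
Definition GE_C : {set T} := ~: (GE_A :|: GE_D).

Definition in_TT : Prop :=
  [/\ is_tree, (forall v, v \in GE_A -> deg v <= 3) & 3 * nu = #|T| - 1].

End Graphs.

(* contraction of a vertex set X into a single new vertex w = None;
   the remaining vertices are Some x with x \notin X. *)
Definition contr_vert (T : finType) (X : {set T}) : finType :=
  option {x : T | x \notin X}.

Definition contr_proj (T : finType) (X : {set T}) (x : T) : contr_vert X :=
  insub x.

Definition contr_rel (T : finType) (e : rel T) (X : {set T}) : rel (contr_vert X) :=
  fun a b => (a != b) &&
    [exists x, exists y, [&& e x y, contr_proj X x == a & contr_proj X y == b]].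
Arguments contr_proj {T} X x.
Arguments contr_rel {T} e X.

From HB Require Import structures.
From mathcomp Require Import all_boot zify.
Set Implicit Arguments. Unset Strict Implicit. Unset Printing Implicit Defensive.

(* A tree lies in the class exactly when some vertex set P meets every edge in exactly
   one end and consists of vertices of degree 3; then A = P, D is the complement of P and
   nu = |P|.  For a tree of the class, a maximum matching pairs every vertex of A with one
   of D, D is independent (both by the formula for nu of two vertex sets joined by a
   single edge), and rooting the tree at r in D makes D \ {r} the set of children of
   vertices of A, at most two each; the count n = 3 nu + 1 turns all these inequalities
   into equalities.  Conversely, rooted at q outside P every p in P has two children, and
   matching p to one of them gives a matching of size |P| missing q.
   X = N[v1] u N[v2] is connected through u5 and meets A only in v1 and v2, so every edge
   leaving X starts outside A; since the tree has no cycles, contracting X keeps the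
   degrees of the other vertices, and A \ {v1, v2} is again such a set P. *)

Section Induced.
Variables (T : finType) (e : rel T).
Implicit Types (S : {set T}).

Definition induced S : rel T := fun x y => [&& x \in S, y \in S & e x y].

Lemma induced_sub S : subrel (induced S) e.
Proof. by move=> x y /and3P[]. Qed.

Lemma induced_subset S S' : S \subset S' -> subrel (induced S) (induced S').
Proof.
by move=> /subsetP sS x y /and3P[xS yS exy]; rewrite /induced (sS _ xS) (sS _ yS).
Qed.

Lemma connect_inducedS S S' x y :
  S \subset S' -> connect (induced S) x y -> connect (induced S') x y.
Proof. by move=> sS; apply: connect_sub => u v /(induced_subset sS) /connect1. Qed.

Lemma path_induced_all S x p : path (induced S) x p -> all (mem S) p.
Proof. by elim: p x => //= y p IH x /andP[/and3P[_ -> _] /IH]. Qed.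

Lemma path_induced S x p :
  x \in S -> path e x p -> all (mem S) p -> path (induced S) x p.
Proof.
elim: p x => //= y p IH x xS /andP[exy pp] /andP[yS aS].
by rewrite /induced xS yS exy /= IH.
Qed.

Lemma connect_induced_mem S x y : x \in S -> connect (induced S) x y -> y \in S.
Proof.
move=> xS /connectP[p /path_induced_all + ->].
by case/lastP: p => //= q z; rewrite all_rcons last_rcons => /andP[].
Qed.

Lemma connect_induced_uniq_path S x y : connect (induced S) x y ->
  exists p, [/\ path (induced S) x p, uniq (x :: p) & last x p = y].
Proof. by move=> /connectP[p /shortenP[p' pp' up' _ ->]]; exists p'. Qed.

Lemma connect_induced_step S v r : connect (induced S) v r -> v != r ->
  exists w, [/\ e v w, w \in S & connect (induced (S :\ v)) w r].
Proof.
move=> /connect_induced_uniq_path[[|w p] [/= pp up lp]] vr; first by rewrite lp eqxx in vr.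
move: pp up => /andP[/and3P[vS wS evw] pp] /andP[vn up]; exists w; split => //.
have /allP pS := path_induced_all pp.
apply/connectP; exists p => //; apply: path_induced.
- by rewrite !inE wS andbT; apply: contraNneq vn => ->; rewrite inE eqxx.
- by move: pp; apply: sub_path; exact: induced_sub.
apply/allP => z zp; rewrite !inE (pS z zp : z \in S) andbT.
by apply: contraNneq vn => <-; rewrite inE zp orbT.
Qed.

Lemma connect_induced_setD1 S a b c : connect (induced S) a b -> a != c ->
  connect (induced (S :\ c)) a b \/ connect (induced S) a c.
Proof.
move=> /connectP[p pp ->]; elim: p a pp => [|d p IH] a /=; first by left.
move=> /andP[ead pp] ac; have [dc | dc] := eqVneq d c.
  by right; apply: connect1; rewrite -dc.
case: (IH d pp dc) => h; last by right; apply: connect_trans h; apply: connect1.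
left; apply: connect_trans h; apply: connect1.
by move: ead; rewrite /induced !inE ac dc => /and3P[-> -> ->].
Qed.

Hypothesis esym : symmetric e.

Lemma connect_induced_sym S x y :
  connect (induced S) x y = connect (induced S) y x.
Proof. by apply: sym_connect_sym => u v; rewrite /induced esym andbCA. Qed.

End Induced.

Section Acyclic.
Variables (T : finType) (e : rel T).
Hypothesis esym : symmetric e.
Hypothesis eirr : irreflexive e.

Definition acyclic := ~ exists c : seq T, [&& uniq c, 2 < size c & cycle e c].

Hypothesis acyc : acyclic.

Lemma neq_of_edge x y : e x y -> x != y.
Proof. by apply: contraTneq => ->; rewrite eirr. Qed.

(* Otherwise the edges [p x], [y q] and paths inside [U] and [W] close a cycle. *)
Lemma acyclic_crossing_edge (U W : {set T}) p q x y :
  [disjoint U & W] -> q \in U -> x \in W ->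
  connect (induced e U) q p -> connect (induced e W) x y -> e p x -> e y q ->
  p = q /\ x = y.
Proof.
move=> dUW qU xW /connect_induced_uniq_path[s1 [ps1 us1 ls1]].
move=> /connect_induced_uniq_path[s2 [ps2 us2 ls2]] epx eyq.
have /allP a1 : all (mem U) (q :: s1) by rewrite /= qU (path_induced_all ps1).
have /allP a2 : all (mem W) (x :: s2) by rewrite /= xW (path_induced_all ps2).
have uc : uniq ((q :: s1) ++ x :: s2).
  rewrite cat_uniq us1 us2 andbT; apply/hasPn => z /a2 zW.
  by apply: contraL zW => /a1 zU; apply/negbT/(disjointFr dUW zU).
have cc : cycle e ((q :: s1) ++ x :: s2).
  rewrite /= rcons_cat cat_path (sub_path (@induced_sub _ _ _) ps1) /= ls1 epx /=.
  by rewrite rcons_path (sub_path (@induced_sub _ _ _) ps2) ls2 eyq.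
case: s1 ps1 us1 ls1 a1 uc cc => [|z1 s1] _ _ ls1 _ uc cc;
case: s2 ps2 us2 ls2 a2 uc cc => [|z2 s2] _ _ ls2 _ uc cc; try by subst.
all: case: acyc; eexists; apply/and3P; split; [exact: uc | | exact: cc].
all: by rewrite size_cat /= ?addnS.
Qed.

Lemma acyclic_nbhd_disconnected a x y :
  e a x -> e a y -> x != y -> ~~ connect (induced e (~: [set a])) x y.
Proof.
move=> eax eay; apply: contraNN => cxy.
have dj : [disjoint [set a] & ~: [set a]] by rewrite disjoints1 in_setC set11.
have xa : x \in ~: [set a] by rewrite in_setC in_set1 eq_sym neq_of_edge.
have eya : e y a by rewrite esym.
by have [_ ->] := acyclic_crossing_edge dj (set11 a) xa (connect0 _ _) cxy eax eya.
Qed.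

End Acyclic.

Section Matchings.
Variables (T : finType) (e : rel T).
Hypothesis eirr : irreflexive e.
Implicit Types (S : {set T}) (M : {set {set T}}).

Lemma matchingP M :
  reflect ((forall E, E \in M -> exists x y, e x y /\ E = [set x; y]) /\ trivIset M)
          (matching e M).
Proof.
apply: (iffP andP) => [[/forall_inP hM tM] | [hM tM]]; split => //.
  by move=> E /hM /existsP[x /existsP[y /andP[exy /eqP ->]]]; exists x, y.
apply/forall_inP => E /hM [x [y [exy ->]]].
by apply/existsP; exists x; apply/existsP; exists y; rewrite exy eqxx.
Qed.

Lemma matching_subset M M' : M' \subset M -> matching e M -> matching e M'.
Proof.
move=> sM /matchingP[hM tM]; apply/matchingP; split; last exact: trivIsetS sM tM.
by move=> E /(subsetP sM) /hM.
Qed.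

Lemma matching0 : matching e set0.
Proof. by apply/matchingP; split => [E|]; rewrite ?inE // /trivIset /cover !big_set0 cards0. Qed.

Lemma matching1 x y : e x y -> matching e [set [set x; y]].
Proof.
move=> exy; apply/matchingP; split; last exact: trivIset1.
by move=> E /set1P ->; exists x, y.
Qed.

Lemma matching_block M E : matching e M -> E \in M ->
  exists x y, [/\ e x y, x != y & E = [set x; y]].
Proof.
move=> /matchingP[hM _] /hM [x [y [exy ->]]]; exists x, y; split => //.
by apply: contraTneq exy => ->; rewrite eirr.
Qed.

Lemma matching_block_neq0 M E : matching e M -> E \in M -> E != set0.
Proof.
by move=> mM /(matching_block mM) [x [y [_ _ ->]]]; apply/set0Pn; exists x; rewrite set21.
Qed.

Lemma card_cover_matching M : matching e M -> #|cover M| = 2 * #|M|.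
Proof.
move=> mM; rewrite mulnC; apply: card_uniform_partition.
  by move=> E /(matching_block mM) [x [y [_ xy ->]]]; rewrite cards2 xy.
have /matchingP[_ tM] := mM; rewrite /partition eqxx tM /=.
by apply: contraT => /negPn /(matching_block_neq0 mM); rewrite eqxx.
Qed.

Lemma matching_block_eq M E E' x : matching e M -> E \in M -> E' \in M ->
  x \in E -> x \in E' -> E = E'.
Proof.
move=> /matchingP[_ /trivIsetP tM] EM E'M xE xE'; apply/eqP; apply: contraT => nE.
by have /pred0P/(_ x) := tM _ _ EM E'M nE; rewrite /= xE xE'.
Qed.

Lemma matchingU M1 M2 : matching e M1 -> matching e M2 ->
  [disjoint cover M1 & cover M2] -> matching e (M1 :|: M2).
Proof.
move=> /matchingP[h1 t1] /matchingP[h2 t2] d; apply/matchingP.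
by split; [move=> E /setUP[/h1|/h2] | exact: trivIsetU].
Qed.

Lemma card_matchingU M1 M2 : matching e M1 ->
  [disjoint cover M1 & cover M2] -> #|M1 :|: M2| = #|M1| + #|M2|.
Proof.
move=> m1 d; apply/eqP; have [_ ->] := leq_card_setU M1 M2.
apply/pred0P => E /=; apply/negP => /andP[E1 E2].
have /set0Pn [x xE] := matching_block_neq0 m1 E1.
have x1 : x \in cover M1 by apply/bigcupP; exists E.
have x2 : x \in cover M2 by apply/bigcupP; exists E.
by have := disjointFr d x1; rewrite x2.
Qed.

Definition matching_on S M := matching e M && (cover M \subset S).
Definition nu_on S := \max_(M | matching_on S M) #|M|.
(* [x] is in [D] of the subgraph induced by [S]: deleting [x] keeps the matching number. *)
Definition GE_D_on S x := (x \in S) && (nu_on (S :\ x) == nu_on S).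

Lemma nu_nu_on : nu e = nu_on setT.
Proof. by apply: eq_bigl => M; rewrite /matching_on subsetT andbT. Qed.

Lemma leq_nu_on S M : matching_on S M -> #|M| <= nu_on S.
Proof. exact: leq_bigmax_cond. Qed.

Lemma nu_on_witness S : exists M, matching_on S M /\ #|M| = nu_on S.
Proof.
have m0 : matching_on S set0 by rewrite /matching_on matching0 /cover big_set0 sub0set.
case: (arg_maxnP (fun M => #|M|) m0) => M mM maxM; exists M; split => //.
by apply/eqP; rewrite eqn_leq leq_nu_on //; apply/bigmax_leqP.
Qed.

Lemma nu_onS S S' : S \subset S' -> nu_on S <= nu_on S'.
Proof.
move=> sS; apply/bigmax_leqP => M /andP[mM cM]; apply: leq_nu_on.
by rewrite /matching_on mM (subset_trans cM sS).
Qed.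

Lemma nu_on_setD1 S x : nu_on S <= (nu_on (S :\ x)).+1.
Proof.
have [M [/andP[mM cM] <-]] := nu_on_witness S.
case: (boolP (x \in cover M)) => [/bigcupP[E EM xE] | nx].
  have /matchingP[_ tM] := mM.
  rewrite (cardsD1 E) EM add1n ltnS; apply: leq_nu_on.
  rewrite /matching_on (matching_subset (subsetDl _ _) mM) coverD1 //=.
  by apply: subset_trans (setSD _ cM); apply: setDS; rewrite sub1set.
apply/leqW/leq_nu_on; rewrite /matching_on mM /=.
apply/subsetP => z zc; rewrite !inE (subsetP cM _ zc) andbT.
by apply: contraNneq nx => <-.
Qed.

Lemma nu_on_notD S x : x \in S -> ~~ GE_D_on S x -> (nu_on (S :\ x)).+1 = nu_on S.
Proof.
rewrite /GE_D_on => -> /= ne; apply/eqP; rewrite eqn_leq nu_on_setD1 andbT.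
by rewrite ltn_neqAle ne nu_onS // subsetDl.
Qed.

Hypothesis esym : symmetric e.

Lemma card_matching_noncrossing S1 S2 M : matching_on (S1 :|: S2) M ->
  (forall z w, z \in S1 -> w \in S2 -> e z w -> [set z; w] \notin M) ->
  #|M| <= nu_on S1 + nu_on S2.
Proof.
move=> /andP[mM cM] nc; pose M_ S := [set E in M | E \subset S].
have mM_ S : matching_on S (M_ S).
  apply/andP; split; first by apply: matching_subset mM; apply/subsetP => E /setIdP[].
  by apply/subsetP => x /bigcupP[E /setIdP[_ /subsetP ES] /ES].
have sM : M \subset M_ S1 :|: M_ S2.
  apply/subsetP => E EM; have [x [y [exy _ Exy]]] := matching_block mM EM.
  have /subsetP ES : E \subset S1 :|: S2 by apply: subset_trans cM; apply: bigcup_sup.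
  have /setUP xS : x \in S1 :|: S2 by apply: ES; rewrite Exy set21.
  have /setUP yS : y \in S1 :|: S2 by apply: ES; rewrite Exy set22.
  rewrite !inE EM Exy !subUset !sub1set.
  case: xS yS => xS [] yS; rewrite ?xS ?yS ?orbT //; exfalso.
    by apply: (negP (nc _ _ xS yS exy)); rewrite -Exy.
  by apply: (negP (nc _ _ yS xS _)); rewrite 1?esym // setUC -Exy.
apply: leq_trans (subset_leq_card sM) _; apply: leq_trans (leq_card_setU _ _) _.
exact: leq_add (leq_nu_on (mM_ S1)) (leq_nu_on (mM_ S2)).
Qed.

Lemma nu_on_setU_ge S1 S2 : [disjoint S1 & S2] -> nu_on S1 + nu_on S2 <= nu_on (S1 :|: S2).
Proof.
move=> d; have [M1 [/andP[m1 c1] <-]] := nu_on_witness S1.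
have [M2 [/andP[m2 c2] <-]] := nu_on_witness S2.
have dc : [disjoint cover M1 & cover M2] by apply: disjointWl c1 _; apply: disjointWr c2 _.
rewrite -card_matchingU //; apply: leq_nu_on; rewrite /matching_on matchingU //=.
by rewrite /cover bigcup_setU setUSS.
Qed.

Lemma nu_on_setU_nonadjacent S1 S2 : [disjoint S1 & S2] ->
  (forall z w, z \in S1 -> w \in S2 -> ~~ e z w) ->
  nu_on (S1 :|: S2) = nu_on S1 + nu_on S2.
Proof.
move=> d nc; apply/eqP; rewrite eqn_leq nu_on_setU_ge // andbT.
have [M [mM <-]] := nu_on_witness (S1 :|: S2); apply: card_matching_noncrossing => // z w zS wS.
by rewrite (negbTE (nc _ _ zS wS)).
Qed.

Definition bridge S1 S2 x y := [/\ [disjoint S1 & S2], x \in S1, y \in S2, e x y &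
  forall z w, z \in S1 -> w \in S2 -> e z w -> z = x /\ w = y].

Lemma bridge_sym S1 S2 x y : bridge S1 S2 x y -> bridge S2 S1 y x.
Proof.
case=> d xS yS exy h; split; rewrite 1?disjoint_sym 1?esym // => z w zS wS ezw.
have ewz : e w z by rewrite esym.
by have [-> ->] := h _ _ wS zS ewz.
Qed.

Lemma card_matching_bridge S1 S2 x y M : bridge S1 S2 x y ->
  matching_on (S1 :|: S2) M -> [set x; y] \in M ->
  #|M| <= (nu_on (S1 :\ x) + nu_on (S2 :\ y)).+1.
Proof.
case=> d xS yS exy h /andP[m c] xyM; have /matchingP[_ tM] := m.
rewrite (cardsD1 [set x; y]) xyM add1n ltnS; apply: card_matching_noncrossing.
  rewrite /matching_on (matching_subset (subsetDl _ _) m) coverD1 //=.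
  apply/subsetP => z /setDP[/(subsetP c) zS]; rewrite !inE negb_or => /andP[zx zy].
  by case/setUP: zS => ->; rewrite ?zx ?zy ?orbT.
move=> z w /setD1P[zx zS] /setD1P[_ wS] ezw.
by have [zx' _] := h _ _ zS wS ezw; rewrite zx' eqxx in zx.
Qed.

Lemma nu_on_bridge_le S1 S2 x y : bridge S1 S2 x y ->
  nu_on (S1 :|: S2) <= nu_on S1 + nu_on S2 + (GE_D_on S1 x && GE_D_on S2 y).
Proof.
move=> B; have [_ xS yS _ h] := B; have [M [mM <-]] := nu_on_witness (S1 :|: S2).
have [xyM | xyM] := boolP ([set x; y] \in M); last first.
  apply: leq_trans (leq_addr _ _); apply: card_matching_noncrossing => // z w zS wS ezw.
  by have [-> ->] := h _ _ zS wS ezw.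
have nuM := card_matching_bridge B mM xyM.
have le1 := nu_on_setD1 S1 x; have le2 := nu_on_setD1 S2 y.
have ge1 := nu_onS (subsetDl S1 [set x]); have ge2 := nu_onS (subsetDl S2 [set y]).
move: nuM; rewrite /GE_D_on xS yS /=.
by case: eqP => [-> | ne1]; case: eqP => [-> | ne2] /=; lia.
Qed.

Lemma nu_on_bridge_ge S1 S2 x y : bridge S1 S2 x y ->
  GE_D_on S1 x -> GE_D_on S2 y -> (nu_on S1 + nu_on S2).+1 <= nu_on (S1 :|: S2).
Proof.
case=> d xS yS exy _ /andP[_ /eqP <-] /andP[_ /eqP <-].
have [M1 [/andP[m1 c1] <-]] := nu_on_witness (S1 :\ x).
have [M2 [/andP[m2 c2] <-]] := nu_on_witness (S2 :\ y).
have dc : [disjoint cover M1 & cover M2].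
  apply: disjointWl c1 _; apply: disjointWr c2 _.
  by apply: disjointWl (subsetDl _ _) _; apply: disjointWr (subsetDl _ _) _.
have c12 : cover (M1 :|: M2) \subset (S1 :\ x) :|: (S2 :\ y).
  by rewrite /cover bigcup_setU setUSS.
have dxy : [disjoint cover [set [set x; y]] & cover (M1 :|: M2)].
  rewrite cover1; apply: disjointWr c12 _; rewrite disjoints_subset.
  apply/subsetP => z /set2P[] ->; rewrite !inE eqxx.
    by rewrite (disjointFr d xS) andbF.
  by rewrite (disjointFl d yS) andbF.
have m12 := matchingU m1 m2 dc.
rewrite -add1n -(cards1 [set x; y]) -card_matchingU // -card_matchingU ?matching1 //.
apply: leq_nu_on; rewrite /matching_on matchingU ?matching1 //=.
rewrite /cover bigcup_setU -/(cover _) -/(cover _) cover1 subUset.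
rewrite (subset_trans c12 (setUSS (subsetDl _ _) (subsetDl _ _))) andbT.
by apply/subsetP => z /set2P[] ->; rewrite inE ?xS ?yS ?orbT.
Qed.

Lemma nu_on_bridge S1 S2 x y : bridge S1 S2 x y ->
  nu_on (S1 :|: S2) = nu_on S1 + nu_on S2 + (GE_D_on S1 x && GE_D_on S2 y).
Proof.
move=> B; apply/eqP; rewrite eqn_leq nu_on_bridge_le //=.
have [/andP[D1 D2] | _] := boolP (GE_D_on S1 x && GE_D_on S2 y).
  by rewrite addn1 (nu_on_bridge_ge B D1 D2).
by have [d _ _ _ _] := B; rewrite addn0 nu_on_setU_ge.
Qed.

Lemma GE_D_on_bridge S1 S2 x y : bridge S1 S2 x y ->
  GE_D_on (S1 :|: S2) x = GE_D_on S1 x && ~~ GE_D_on S2 y.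
Proof.
move=> B; have [d xS yS exy h] := B.
have E : (S1 :|: S2) :\ x = (S1 :\ x) :|: S2.
  by apply/setP => z; rewrite !inE; case: eqVneq => [-> | ] //=; rewrite (disjointFr d xS).
have nx : nu_on ((S1 :|: S2) :\ x) = nu_on (S1 :\ x) + nu_on S2.
  rewrite E nu_on_setU_nonadjacent //; first exact: disjointWl (subsetDl _ _) _.
  move=> z w /setD1P[zx zS] wS; apply: contraNN zx => ezw.
  by have [-> _] := h _ _ zS wS ezw.
rewrite {1}/GE_D_on inE xS /= nx (nu_on_bridge B).
have [D1 | nD1] := boolP (GE_D_on S1 x); last first.
  by rewrite -(nu_on_notD xS nD1); case: (GE_D_on S2 y) => /=; apply/negbTE; lia.
have /andP[_ /eqP ->] := D1.
by case: (GE_D_on S2 y) => /=; [apply/negbTE; lia | rewrite addn0 eqxx].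
Qed.

End Matchings.

Section Branches.
Variables (T : finType) (e : rel T).
Hypothesis esym : symmetric e.
Hypothesis eirr : irreflexive e.
Hypothesis acyc : acyclic e.
Implicit Types (S X : {set T}) (M : {set {set T}}).

Definition branch a x := [set z | connect (induced e (~: [set a])) x z].

Lemma branch_refl a x : x \in branch a x.
Proof. by rewrite inE connect0. Qed.

Lemma branch_neq a x z : x != a -> z \in branch a x -> z != a.
Proof.
move=> xa; rewrite inE => /connect_induced_mem.
by rewrite !inE xa => /(_ isT).
Qed.

Lemma branch_notin a x : x != a -> a \notin branch a x.
Proof. by move=> xa; apply: contraTN isT => /(branch_neq xa); rewrite eqxx. Qed.

Lemma branch_disjoint a x y : e a x -> e a y -> x != y -> [disjoint branch a x & branch a y].
Proof.
move=> eax eay xy; apply/pred0P => z /=; rewrite !inE.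
apply: contraNF (acyclic_nbhd_disconnected esym eirr acyc eax eay xy) => /andP[cx cy].
by rewrite (connect_trans cx) // connect_induced_sym.
Qed.

Lemma bridge_branch x a : e x a -> bridge e (branch a x) (~: branch a x) x a.
Proof.
move=> exa; have xa := neq_of_edge eirr exa; split.
- by rewrite -setI_eq0 setICr.
- exact: branch_refl.
- by rewrite inE branch_notin.
- exact: exa.
move=> z w zB; rewrite inE => wB ezw; have za := branch_neq xa zB.
have wa : w = a.
  apply/eqP; apply: contraNT wB => wa; move: zB; rewrite !inE => czx.
  by apply: connect_trans czx (connect1 _); rewrite /induced !inE za wa ezw.
subst w; split => //; apply/eqP; apply: contraT => zx.
have eaz : e a z by rewrite esym.
have eax : e a x by rewrite esym.
have xz : x != z by rewrite eq_sym.
by have := acyclic_nbhd_disconnected esym eirr acyc eax eaz xz; rewrite inE in zB; rewrite zB.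
Qed.

Lemma bridgeSr S1 S2 S2' x y : bridge e S1 S2 x y -> S2' \subset S2 -> y \in S2' ->
  bridge e S1 S2' x y.
Proof.
case=> d xS yS exy h sS yS'; split => //; first exact: disjointWr sS _.
by move=> z w zS wS; apply: h => //; apply: (subsetP sS).
Qed.

Lemma GE_D_on_setT x : (x \in GE_D e) = GE_D_on e setT x.
Proof.
rewrite /GE_D_on in_setT /= -nu_nu_on inE; apply/existsP/idP.
  case=> M /andP[/andP[mM /eqP cM] nx]; rewrite -cM eqn_leq.
  rewrite {1}cM nu_nu_on nu_onS ?subsetDl //= leq_nu_on //.
  rewrite /matching_on mM /=; apply/subsetP => z zc; rewrite !inE andbT.
  by apply: contraNneq nx => <-.
move=> /eqP nuE; have [M [/andP[mM cM] eM]] := nu_on_witness e (setT :\ x).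
exists M; rewrite /max_matching mM eM nuE eqxx /=.
by apply: contraTN isT => /(subsetP cM); rewrite !inE eqxx.
Qed.

Lemma GE_D_independent x y : x \in GE_D e -> y \in GE_D e -> ~~ e x y.
Proof.
rewrite !GE_D_on_setT => dx dy; apply/negP => exy.
have B := bridge_branch exy.
move: dx; rewrite -(setUCr (branch y x)) (GE_D_on_bridge eirr esym B) => /andP[_].
move: dy; rewrite -(setUCr (branch y x)) setUC.
by rewrite (GE_D_on_bridge eirr esym (bridge_sym esym B)) => /andP[->].
Qed.

Lemma matching_edge M x y : matching e M -> [set x; y] \in M -> e x y.
Proof.
move=> mM /(matching_block eirr mM) [u [v [euv uv E]]].
have uE : u \in [set x; y] by rewrite E set21.
have vE : v \in [set x; y] by rewrite E set22.
have : x \in [set u; v] by rewrite -E set21.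
rewrite !inE in uE vE * => /orP[] /eqP xE; subst x.
  by case/orP: vE => /eqP vE; [rewrite vE eqxx in uv | rewrite -vE].
by case/orP: uE => /eqP uE; [rewrite uE eqxx in uv | rewrite -uE esym].
Qed.

Lemma GE_D_on_nbr x a X : x \in GE_D e -> e x a ->
  branch a x \subset X -> a \in X -> ~~ GE_D_on e X a.
Proof.
move=> xD exa ZX aX; set Z := branch a x.
have B := bridge_branch exa.
have Dx : GE_D_on e Z x.
  by move: xD; rewrite GE_D_on_setT -(setUCr Z) (GE_D_on_bridge eirr esym B) => /andP[].
have aXZ : a \in X :\: Z by rewrite inE aX branch_notin // (neq_of_edge eirr exa).
have sXZ : X :\: Z \subset ~: Z by rewrite setDE subsetIr.
have B' := bridge_sym esym (bridgeSr B sXZ aXZ).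
have -> : X = (X :\: Z) :|: Z by rewrite -{1}(setID X Z) setUC (setIidPr ZX).
by rewrite (GE_D_on_bridge eirr esym B') Dx andbF.
Qed.

Lemma GE_A_mate_GE_D a b M : a \in GE_A e -> max_matching e M -> [set a; b] \in M ->
  b \in GE_D e.
Proof.
move=> /setDP[]; rewrite inE => /exists_inP[x xD exa] _ /andP[mM /eqP cM] abM.
have eba : e b a by rewrite esym (matching_edge mM abM).
have [<- // | xb] := eqVneq x b.
set Y := branch a b; have Bb := bridge_branch eba; have B := bridge_sym esym Bb.
have aY : a \in ~: Y by rewrite in_setC branch_notin // (neq_of_edge eirr eba).
have nDa : ~~ GE_D_on e (~: Y) a.
  have eax : e a x by rewrite esym.
  have eab : e a b by rewrite esym.
  apply: GE_D_on_nbr xD exa _ aY; rewrite -disjoints_subset.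
  exact: branch_disjoint eax eab xb.
have VU : ~: Y :|: Y = setT by rewrite setUC setUCr.
rewrite GE_D_on_setT -(setUCr Y) (GE_D_on_bridge eirr esym Bb) nDa andbT.
apply: contraT => nDb; have mMT : matching_on e (~: Y :|: Y) M.
  by rewrite /matching_on mM VU subsetT.
have := card_matching_bridge eirr esym B mMT abM.
rewrite cM nu_nu_on -VU (nu_on_bridge eirr esym B) (negbTE nDa) /= addn0.
by rewrite -(nu_on_notD aY nDa) -(nu_on_notD (branch_refl a b) nDb) addSn addnS !ltnS ltnn.
Qed.

End Branches.

Section Rooted.
Variables (T : finType) (e : rel T).
Hypothesis esym : symmetric e.
Hypothesis eirr : irreflexive e.
Hypothesis conn : forall x y, connect e x y.
Hypothesis acyc : acyclic e.
Variable r : T.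
Local Notation branch := (branch e).

(* Junk value: [parent r = r], since [r] lies in no branch at [r]. *)
Definition parent v := odflt v [pick w | e v w && (r \in branch v w)].

Lemma parent_spec v : v != r -> e v (parent v) /\ r \in branch v (parent v).
Proof.
move=> vr; rewrite /parent; case: pickP => [w /andP[] // | none]; exfalso.
have : connect (induced e setT) v r.
  by apply: connect_sub (conn v r) => x y exy; apply: connect1; rewrite /induced !inE.
case/connect_induced_step => // w [evw _ cw].
by move: (none w); rewrite evw inE -setTD cw.
Qed.

Lemma parent_eq v w : v != r -> e v w -> r \in branch v w -> parent v = w.
Proof.
move=> vr evw rw; have [ep rp] := parent_spec vr.
apply/eqP; apply: contraT => pw.
by have /pred0P/(_ r) := branch_disjoint esym eirr acyc ep evw pw; rewrite /= rp rw.
Qed.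

Lemma parent_nbr v w : e v w -> w != r -> (v != r -> w != parent v) -> parent w = v.
Proof.
move=> evw wr wp; apply: parent_eq => //; first by rewrite esym.
have [-> | vr] := eqVneq v r; first exact: branch_refl.
have [ep /[!inE] rp] := parent_spec vr; have pw : parent v != w by rewrite eq_sym wp.
have [c | c] := connect_induced_setD1 rp pw; last first.
  by have := acyclic_nbhd_disconnected esym eirr acyc ep evw pw; rewrite c.
apply: connect_trans (connect1 _) (connect_inducedS _ c).
  by rewrite /induced !inE ep pw (neq_of_edge eirr evw).
by apply/subsetP => z /[!inE] /andP[].
Qed.

Lemma parent_parent_neq v : v != r -> parent v != r -> parent (parent v) != v.
Proof.
move=> vr ur; apply/eqP => ppv.
have [_] := parent_spec ur; rewrite ppv inE => /connect_induced_step [//|w [evw wu cw]].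
have pw : parent v = w.
  apply: parent_eq => //; rewrite inE; apply: connect_inducedS cw.
  by apply/subsetP => z /[!inE] /andP[].
by move: wu; rewrite -pw !inE eqxx.
Qed.

Lemma card_nbhd_parent v : v != r -> #|nbhd e v :\ parent v| + 1 = deg e v.
Proof.
move=> vr; have [ep _] := parent_spec vr.
by rewrite /deg [RHS](cardsD1 (parent v)) inE ep addnC.
Qed.

Definition children (Q : {set T}) p := [set q in Q | (q != r) && (parent q == p)].

Lemma children_sub (Q : {set T}) p : p != r -> children Q p \subset nbhd e p :\ parent p.
Proof.
move=> pr; apply/subsetP => q /[!inE] /andP[_ /andP[qr /eqP pq]].
have [eqp _] := parent_spec qr; rewrite pq in eqp.
rewrite esym eqp andbT eq_sym.
by have := parent_parent_neq qr; rewrite pq => /(_ pr).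
Qed.

Lemma children_full (Q : {set T}) p : p != r -> nbhd e p \subset Q ->
  children Q p = nbhd e p :\ parent p.
Proof.
move=> pr /subsetP sQ; apply/eqP; rewrite eqEsubset children_sub //=.
apply/subsetP => w /[!inE] /andP[wp epw].
have wr : w != r.
  apply: contra_neq wp => wr; have rw : r \in branch p w by rewrite -wr branch_refl.
  by rewrite (parent_eq pr epw rw).
by rewrite sQ ?inE // wr /=; apply/eqP; apply: parent_nbr.
Qed.

Lemma card_setD1_children (P Q : {set T}) :
  (forall q, q \in Q -> q != r -> parent q \in P) ->
  #|Q :\ r| = \sum_(p in P) #|children Q p|.
Proof.
move=> QP; rewrite -sum1_card (partition_big parent (mem P)) /=; last first.
  by move=> q /[!inE] /andP[qr qQ]; apply: QP.
apply: eq_bigr => p _; rewrite -sum1_card; apply: eq_bigl => q.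
by rewrite !inE andbA (andbC (q != r)).
Qed.

End Rooted.

Definition cubic_transversal (T : finType) (e : rel T) (P : {set T}) :=
  (forall x y, e x y -> (x \in P) != (y \in P)) /\ (forall p, p \in P -> deg e p = 3).

Section CubicTransversal.
Variables (T : finType) (e : rel T) (P : {set T}).
Hypothesis esym : symmetric e.
Hypothesis eirr : irreflexive e.
Hypothesis conn : forall x y, connect e x y.
Hypothesis acyc : acyclic e.
Hypothesis P_cross : forall x y, e x y -> (x \in P) != (y \in P).
Hypothesis P_deg : forall p, p \in P -> deg e p = 3.

Lemma nbhd_transversal p w : p \in P -> w \in nbhd e p -> w \notin P.
Proof. by move=> pP /[!inE] /P_cross; rewrite pP. Qed.

(* Each block has exactly one end in [P]. *)
Lemma card_matching_transversal M : matching e M -> #|M| = #|cover M :&: P|.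
Proof.
move=> mM; have /matchingP[_ tM] := mM.
have inj : {in cover M :&: P &, injective (pblock M)}.
  move=> x y /setIP[xc xP] /setIP[yc yP] Exy.
  have [u [v [euv _ E]]] := matching_block eirr mM (pblock_mem xc).
  have := mem_pblock M x; have := mem_pblock M y; rewrite xc yc -Exy E.
  case/set2P => yE /set2P[] xE; rewrite xE yE //;
    by have := P_cross euv; rewrite -xE -yE xP yP.
rewrite -(card_in_imset inj); apply: eq_card => E; apply/idP/imsetP.
  move=> EM; have [u [v [euv _ E_]]] := matching_block eirr mM EM.
  have uc : u \in cover M by apply/bigcupP; exists E; rewrite // E_ set21.
  have vc : v \in cover M by apply/bigcupP; exists E; rewrite // E_ set22.
  have [uP | uP] := boolP (u \in P).
    by exists u; [rewrite inE uc | rewrite (def_pblock tM EM) // E_ set21].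
  have vP : v \in P by move: (P_cross euv); rewrite (negbTE uP); case: (v \in P).
  by exists v; [rewrite inE vc | rewrite (def_pblock tM EM) // E_ set22].
by case=> x /setIP[xc _] ->; apply: pblock_mem.
Qed.

Lemma card_matching_le M : matching e M -> #|M| <= #|P|.
Proof. by move=> mM; rewrite card_matching_transversal // subset_leq_card ?subsetIr. Qed.

Lemma transversal_sub_cover M : matching e M -> #|P| <= #|M| -> P \subset cover M.
Proof.
move=> mM; rewrite card_matching_transversal // => leP.
have /eqP <- : cover M :&: P == P by rewrite eqEcard subsetIr leP.
exact: subsetIl.
Qed.

Definition first_child q p := odflt p [pick w in children e q (~: P) p].

Lemma first_childP q p : q \notin P -> p \in P ->
  [/\ e p (first_child q p), first_child q p \notin P,
      first_child q p != q & parent e q (first_child q p) = p].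
Proof.
move=> qP pP; set c := first_child q p; have pq : p != q by apply: contraNneq qP => <-.
have chE : children e q (~: P) p = nbhd e p :\ parent e q p.
  apply: children_full => //; apply/subsetP => w /(nbhd_transversal pP).
  by rewrite inE.
have : c \in children e q (~: P) p.
  rewrite /c /first_child; case: pickP => [w // | none]; exfalso.
  have := card_nbhd_parent conn pq; rewrite P_deg // -chE (eq_card0 none).
  by [].
rewrite /children !inE => /and3P[cP cq /eqP pc]; split => //.
by have [] := parent_spec conn cq; rewrite pc esym.
Qed.

Lemma matching_avoiding q : q \notin P ->
  exists M, [/\ matching e M, #|M| = #|P| & q \notin cover M].
Proof.
move=> qP; pose M := [set [set p; first_child q p] | p in P].
have inj : {in P &, injective (fun p => [set p; first_child q p])}.
  move=> p p' pP p'P E; have : p \in [set p'; first_child q p'] by rewrite -E set21.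
  case/set2P => // pc; have [_ cP _ _] := first_childP qP p'P.
  by rewrite -pc pP in cP.
exists M; split; [ | by rewrite card_in_imset | ].
- apply/matchingP; split=> [_ /imsetP[p pP ->] | ].
    by exists p, (first_child q p); have [] := first_childP qP pP.
  apply/trivIsetP => _ _ /imsetP[p pP ->] /imsetP[p' p'P ->] ne.
  have pp' : p != p' by apply: contraNneq ne => ->.
  have [_ cP _ pc] := first_childP qP pP; have [_ cP' _ pc'] := first_childP qP p'P.
  rewrite -setI_eq0; apply/eqP/setP => z; rewrite !inE.
  apply/negbTE; apply/negP => /andP[/orP[]/eqP -> /orP[]/eqP].
  + by move=> pE; rewrite pE eqxx in pp'.
  + by move=> pE; rewrite -pE pP in cP'.
  + by move=> pE; rewrite pE p'P in cP.
  + by move=> cE; rewrite -pc -pc' cE eqxx in pp'.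
- apply/bigcupP => -[_ /imsetP[p pP ->] /set2P[] qE].
    by rewrite qE pP in qP.
  by have [_ _ + _] := first_childP qP pP; rewrite -qE eqxx.
Qed.

Lemma exists_notin_transversal (x0 : T) : exists q, q \notin P.
Proof.
have [x0P | ] := boolP (x0 \in P); last by exists x0.
have /card_gt0P[w] : 0 < #|nbhd e x0| by rewrite -/(deg e x0) P_deg.
by exists w; apply: nbhd_transversal x0P _.
Qed.

Lemma nu_transversal (x0 : T) : nu e = #|P|.
Proof.
have [q qP] := exists_notin_transversal x0; have [M [mM cM _]] := matching_avoiding qP.
apply/eqP; rewrite eqn_leq /nu -{2}cM leq_bigmax_cond // andbT.
by apply/bigmax_leqP => M' /card_matching_le.
Qed.

Lemma GE_D_transversal (x0 : T) : GE_D e = ~: P.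
Proof.
apply/setP => z; rewrite in_setC; have [zP | zP] := boolP (z \in P); rewrite inE.
  apply/existsP => -[M /andP[/andP[mM /eqP cM] nz]].
  have : #|P| <= #|M| by rewrite cM (nu_transversal x0).
  by move=> /(transversal_sub_cover mM) /subsetP /(_ z zP); rewrite (negbTE nz).
have [M [mM cM nz]] := matching_avoiding zP.
by apply/existsP; exists M; rewrite /max_matching mM cM (nu_transversal x0) eqxx.
Qed.

Lemma GE_A_transversal (x0 : T) : GE_A e = P.
Proof.
apply/setP => z; rewrite in_setD (GE_D_transversal x0) in_setC negbK.
have [zP | //] := boolP (z \in P); rewrite inE.
have /card_gt0P[w] : 0 < #|nbhd e z| by rewrite -/(deg e z) P_deg.
move=> wz; apply/exists_inP; exists w; last by move: wz; rewrite inE esym.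
by rewrite in_setC (nbhd_transversal zP).
Qed.

(* Rooted at [q], every other vertex outside [P] is one of the two children of a
   vertex of [P]. *)
Lemma card_transversal (x0 : T) : #|T| = 3 * #|P| + 1.
Proof.
have [q qP] := exists_notin_transversal x0.
have hpar v : v \in ~: P -> v != q -> parent e q v \in P.
  move=> /[!inE] vP vq; have [ep _] := parent_spec conn vq.
  by move: (P_cross ep); rewrite (negbTE vP); case: (_ \in P).
have := card_setD1_children hpar; rewrite (eq_bigr (fun _ => 2)); last first.
  move=> p pP; have pq : p != q by apply: contraNneq qP => <-.
  rewrite (children_full esym eirr conn acyc pq); last first.
    by apply/subsetP => w /(nbhd_transversal pP); rewrite inE.
  by have := card_nbhd_parent conn pq; rewrite P_deg //; lia.
rewrite sum_nat_const -(cardsC P) (cardsD1 q (~: P)) in_setC qP.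
by lia.
Qed.

End CubicTransversal.

Lemma eq_sum_leq_const (T : finType) (A : {set T}) (f : T -> nat) k :
  {in A, forall a, f a <= k} -> \sum_(a in A) f a = #|A| * k -> {in A, forall a, f a = k}.
Proof.
move=> le_fk sumf a aA; apply/eqP; rewrite eqn_leq le_fk //=.
have /eqP : \sum_(a in A) (k - f a) = 0 by rewrite sumnB // sum_nat_const sumf subnn.
by rewrite sum_nat_eq0 => /forall_inP/(_ a aA); rewrite subn_eq0.
Qed.

Section GallaiEdmondsTree.
Variables (T : finType) (e : rel T).
Hypothesis esym : symmetric e.
Hypothesis eirr : irreflexive e.
Hypothesis conn : forall x y, connect e x y.
Hypothesis acyc : acyclic e.
Local Notation A := (GE_A e).
Local Notation D := (GE_D e).
Implicit Types (M : {set {set T}}).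

Lemma GE_A_notin_D a : a \in A -> a \notin D.
Proof. by case/setDP. Qed.

Lemma cover_max_matching x M : x \notin D -> max_matching e M -> x \in cover M.
Proof.
by move=> xD mM; apply: contraR xD => xM; rewrite inE; apply/existsP; exists M; rewrite mM.
Qed.

Lemma exists_GE_D : 2 * nu e < #|T| -> exists r, r \in D.
Proof.
move=> nuT; have [M [/andP[mM _] cM]] := nu_on_witness e setT.
have maxM : max_matching e M by rewrite /max_matching mM cM nu_nu_on eqxx.
have : #|cover M| < #|T| by rewrite (card_cover_matching eirr mM) cM -nu_nu_on.
rewrite -(cardsC (cover M)) -ltn_subLR // subnn => /card_gt0P[r].
by rewrite in_setC => rM; exists r; apply: contraR rM => /cover_max_matching; apply.
Qed.

Definition mate M a := odflt a [pick b | [set a; b] \in M].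

Lemma mate_block M a : matching e M -> a \in cover M -> [set a; mate M a] \in M.
Proof.
move=> mM /bigcupP[E EM aE]; rewrite /mate; case: pickP => [b // | none].
have [u [v [_ _ Euv]]] := matching_block eirr mM EM.
move: aE; rewrite Euv => /set2P[] au.
  by move: (none v); rewrite au -Euv EM.
by move: (none u); rewrite au setUC -Euv EM.
Qed.

Lemma mate_GE_A M a : max_matching e M -> a \in A ->
  [set a; mate M a] \in M /\ mate M a \in D.
Proof.
move=> maxM aA; have [mM _] := andP maxM.
have aM := mate_block mM (cover_max_matching (GE_A_notin_D aA) maxM).
by split => //; exact: (GE_A_mate_GE_D esym eirr acyc aA maxM aM).
Qed.

Lemma mate_inj M : max_matching e M -> {in A &, injective (mate M)}.
Proof.
move=> maxM a a' aA a'A maa'; have [mM _] := andP maxM.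
have [aM aD] := mate_GE_A maxM aA; have [a'M _] := mate_GE_A maxM a'A.
have := matching_block_eq mM aM a'M (set22 _ _); rewrite maa' set22 => /(_ isT) E.
have /set2P[// | aE] : a \in [set a'; mate M a'] by rewrite -E set21.
by rewrite maa' -aE (negbTE (GE_A_notin_D aA)) in aD.
Qed.

Lemma card_GE_A_le M : max_matching e M -> #|A| <= nu e /\ #|~: D| + #|A| <= 2 * nu e.
Proof.
move=> maxM; have [mM /eqP <-] := andP maxM; split.
  have inj : {in A &, injective (fun a => [set a; mate M a])}.
    move=> a a' aA a'A E; apply: (mate_inj maxM) => //.
    have : mate M a \in [set a'; mate M a'] by rewrite -E set22.
    case/set2P => // ma; have [_] := mate_GE_A maxM aA.
    by rewrite ma (negbTE (GE_A_notin_D a'A)).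
  rewrite -(card_in_imset inj); apply/subset_leq_card/subsetP => _ /imsetP[a aA ->].
  by have [] := mate_GE_A maxM aA.
have dj : [disjoint ~: D & mate M @: A].
  rewrite disjoint_sym disjoints_subset setCK; apply/subsetP => _ /imsetP[a aA ->].
  by have [] := mate_GE_A maxM aA.
rewrite -(card_cover_matching eirr mM) -(card_in_imset (mate_inj maxM)).
have [_] := leq_card_setU (~: D) (mate M @: A); rewrite dj => /eqP <-.
apply: subset_leq_card; rewrite subUset.
apply/andP; split; apply/subsetP => x.
  by rewrite in_setC => /cover_max_matching; apply.
case/imsetP => a aA ->; have [aM _] := mate_GE_A maxM aA.
by apply/bigcupP; exists [set a; mate M a]; rewrite ?set22.
Qed.

Lemma parent_GE_D r d : d \in D -> d != r -> parent e r d \in A.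
Proof.
move=> dD dr; have [ep _] := parent_spec conn dr; rewrite in_setD.
have [pD | pD] := boolP (parent e r d \in D).
  by have := GE_D_independent esym eirr acyc dD pD; rewrite ep.
by rewrite inE; apply/exists_inP; exists d.
Qed.

Section Counting.
Hypothesis deg_A : forall a, a \in A -> deg e a <= 3.
Hypothesis nu_T : 3 * nu e = #|T| - 1.
Hypothesis T_gt0 : 0 < #|T|.

(* Rooted at [r], the vertices of [D :\ r] are children of vertices of [A], at most two
   each; comparing with [n = 3 nu + 1] forces every inequality to be an equality. *)
Lemma GE_D_children r : r \in D ->
  D = ~: A /\ {in A, forall a, #|children e r D a| = 2}.
Proof.
move=> rD; have [M [/andP[mM _] cM]] := nu_on_witness e setT.
have maxM : max_matching e M by rewrite /max_matching mM cM nu_nu_on eqxx.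
have [leA leDA] := card_GE_A_le maxM.
have ch_le a : a \in A -> #|children e r D a| <= 2.
  move=> aA; have ar : a != r by apply: contraNneq (GE_A_notin_D aA) => ->.
  have := subset_leq_card (children_sub esym eirr conn acyc D ar).
  by have := card_nbhd_parent conn ar; have := deg_A aA; lia.
have sumD := card_setD1_children (@parent_GE_D r).
have le_Dr : #|D :\ r| <= #|A| * 2 by rewrite sumD -sum_nat_const; apply: leq_sum.
have := cardsD1 r D; have := cardsC D; rewrite rD add1n => cardT cardD.
have [Dr2 cardA] : #|D :\ r| = #|A| * 2 /\ #|~: D| = #|A| by lia.
split; last by apply: (eq_sum_leq_const (k := 2) ch_le); rewrite -sumD Dr2.
have /eqP -> : A == ~: D.
  rewrite eqEcard cardA leqnn andbT.
  by apply/subsetP => z /GE_A_notin_D; rewrite in_setC.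
by rewrite setCK.
Qed.

Lemma cubic_transversal_GE_A : cubic_transversal e A /\ D = ~: A.
Proof.
have [r rD] : exists r, r \in D by apply: exists_GE_D; lia.
have [DA ch2] := GE_D_children rD.
have ar a : a \in A -> a != r by move=> aA; apply: contraTneq rD => <-; rewrite DA in_setC aA.
have chE a : a \in A -> children e r D a = nbhd e a :\ parent e r a /\ deg e a = 3.
  move=> aA; have sub := children_sub esym eirr conn acyc D (ar a aA).
  have := card_nbhd_parent conn (ar a aA); have := deg_A aA; have := subset_leq_card sub.
  rewrite ch2 // => le2 le3 cardE; split; last by lia.
  by apply/eqP; rewrite eqEcard sub ch2 //=; lia.
have notA_child a x : a \in A -> x \in nbhd e a :\ parent e r a -> x \notin A.
  by move=> aA; rewrite -(chE a aA).1 => /setIdP[]; rewrite DA in_setC.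
split; [split => [x y exy | a /chE[_ //]] | by []].
have [xA | xA] := boolP (x \in A); have [yA | yA] := boolP (y \in A) => //=.
  have [yp | ypx] := eqVneq y (parent e r x).
    suff : x \notin A by rewrite xA.
    apply: (notA_child y) => //; rewrite !inE esym exy andbT yp eq_sym.
    by apply: (parent_parent_neq esym eirr conn acyc); rewrite -?yp; apply: ar.
  suff : y \notin A by rewrite yA.
  by apply: (notA_child x) => //; rewrite !inE exy ypx.
have xD : x \in D by rewrite DA in_setC.
have yD : y \in D by rewrite DA in_setC.
by have := GE_D_independent esym eirr acyc xD yD; rewrite exy.
Qed.

End Counting.

End GallaiEdmondsTree.

Section Contraction.
Variables (T : finType) (e : rel T) (X : {set T}).
Local Notation T' := (contr_vert X).
Local Notation e' := (contr_rel e X).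
Local Notation proj := (contr_proj X).
Implicit Types (s t : {x : T | x \notin X}) (a b : T').

Lemma contr_proj_eqNone x : (proj x == None) = (x \in X).
Proof. by rewrite /contr_proj; case: insubP => [u /negPf -> // | /negPn ->]. Qed.

Lemma contr_projK s : proj (val s) = Some s.
Proof. exact: valK. Qed.

Lemma contr_proj_Some x s : proj x = Some s -> val s = x.
Proof. by rewrite /contr_proj; case: insubP => // u _ <- [->]. Qed.

Lemma contr_val_notin s : val s \notin X.
Proof. by case: s. Qed.

Lemma contr_relP a b :
  reflect (a != b /\ exists x y, [/\ e x y, proj x = a & proj y = b]) (e' a b).
Proof.
apply: (iffP andP) => [[ab /existsP[x /existsP[y /and3P[exy /eqP ax /eqP yb]]]] | ].
  by split => //; exists x, y.
case=> ab [x [y [exy ax yb]]]; split => //.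
by apply/existsP; exists x; apply/existsP; exists y; rewrite exy ax yb !eqxx.
Qed.

Lemma contr_rel_irr : irreflexive e'.
Proof. by move=> a; apply/contr_relP => -[]; rewrite eqxx. Qed.

Lemma contr_rel_proj x y : e x y -> proj x != proj y -> e' (proj x) (proj y).
Proof. by move=> exy ne; apply/contr_relP; split => //; exists x, y. Qed.

Lemma contr_rel_Some s t : e' (Some s) (Some t) -> e (val s) (val t).
Proof. by case/contr_relP=> _ [x [y [exy /contr_proj_Some -> /contr_proj_Some ->]]]. Qed.

Lemma connect_contr_proj x y : connect e x y -> connect e' (proj x) (proj y).
Proof.
move=> /connectP[p pp ->]; elim: p x pp => [|z p IH] x /= ; first by rewrite connect0.
case/andP=> exz /IH; apply: connect_trans.
have [-> // | ne] := eqVneq (proj x) (proj z).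
by apply/connect1/contr_rel_proj.
Qed.

Lemma contr_connect x0 : x0 \in X -> (forall x y, connect e x y) -> forall a b, connect e' a b.
Proof.
move=> x0X conn a b.
have onto c : exists x, proj x = c.
  case: c => [s|]; first by exists (val s); rewrite contr_projK.
  by exists x0; apply/eqP; rewrite contr_proj_eqNone.
by have [x <-] := onto a; have [y <-] := onto b; apply: connect_contr_proj.
Qed.

Lemma contr_path_lift d a c : path e' a c -> a != None -> None \notin c ->
  path e (oapp val d a) (map (oapp val d) c).
Proof.
elim: c a => [|b c IH] [s|] //= /andP[eab pc] _; rewrite inE negb_or => /andP[bN cN].
by case: b eab bN pc => [t|] // /contr_rel_Some -> _ pc /=; apply: (IH (Some t)).
Qed.

Lemma contr_path_connect s t c : path e' (Some s) c -> None \notin c ->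
  last (Some s) c = Some t -> connect (induced e (~: X)) (val s) (val t).
Proof.
move=> pc Nc lc; apply/connectP; exists (map (oapp val (val s)) c); last first.
  by rewrite -[val s]/(oapp val (val s) (Some s)) last_map lc.
apply: path_induced; first by rewrite in_setC contr_val_notin.
  exact: (contr_path_lift (val s) pc isT Nc).
apply/allP => _ /mapP[[u|] uc ->]; first by rewrite /= in_setC contr_val_notin.
by rewrite uc in Nc.
Qed.

Hypothesis esym : symmetric e.
Hypothesis eirr : irreflexive e.
Hypothesis acyc : acyclic e.
Hypothesis Xconn : forall z z', z \in X -> z' \in X -> connect (induced e X) z z'.

Lemma contr_rel_sym : symmetric e'.
Proof.
move=> a b; apply/contr_relP/contr_relP => -[ab [x [y [exy ax yb]]]];
  by split; [rewrite eq_sym | exists y, x; rewrite esym].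
Qed.

Lemma contr_nbhd s : nbhd e' (Some s) = proj @: nbhd e (val s).
Proof.
apply/setP => b; rewrite inE; apply/idP/imsetP.
  by case/contr_relP => _ [x [y [exy /contr_proj_Some xE yb]]]; exists y; rewrite // inE xE.
case=> y /[!inE] ey ->; rewrite -contr_projK; apply: contr_rel_proj => //.
apply: contraTneq ey; rewrite contr_projK => sy.
by rewrite -(contr_proj_Some (Logic.eq_sym sy)) eirr.
Qed.

(* Two neighbours of [val s] in [X] would be joined by a second path through [X]. *)
Lemma contr_deg s : deg e' (Some s) = deg e (val s).
Proof.
rewrite /deg contr_nbhd card_in_imset // => y y' /[!inE] ey ey' yy'.
case E : (proj y) yy' => [t|] yy'.
  by rewrite -(contr_proj_Some E) -(contr_proj_Some (Logic.eq_sym yy')).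
have yX : y \in X by rewrite -contr_proj_eqNone E.
have y'X : y' \in X by rewrite -contr_proj_eqNone -yy'.
have dj : [disjoint X & [set val s]] by rewrite disjoint_sym disjoints1 contr_val_notin.
have ey's : e y' (val s) by rewrite esym.
by have [] := acyclic_crossing_edge acyc dj yX (set11 _) (Xconn yX y'X) (connect0 _ _) ey's ey.
Qed.

Lemma contr_cycle_None c : uniq c -> 2 < size c -> cycle e' c -> None \in c.
Proof.
move=> uc sc; apply: contraTT => Nc; case: c uc sc Nc => [|[s|] c] // uc sc Nc.
apply/negP => /(contr_path_lift (val s)) /(_ isT); rewrite mem_rcons Nc map_rcons.
move=> /(_ isT) pc; apply: acyc; exists (map (oapp val (val s)) (Some s :: c)).
rewrite map_inj_in_uniq ?uc ?size_map ?sc //= => -[u|] [v|] //=; rewrite ?(negbTE Nc) //.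
by move=> _ _ /val_inj ->.
Qed.

Lemma contr_rel_NoneP s : e' None (Some s) -> exists2 p, p \in X & e p (val s).
Proof.
case/contr_relP => _ [p [y [epy /eqP pX /contr_proj_Some yE]]].
by exists p; rewrite -?contr_proj_eqNone ?yE.
Qed.

(* A cycle through [None] leaves and re-enters [X] along two edges joining the connected sets
   [X] and [~: X]; these edges must coincide, which the length of the cycle forbids. *)
Lemma contr_acyclic : acyclic e'.
Proof.
case=> c /and3P[uc sc cc]; have /rot_to[i s rotE] := contr_cycle_None uc sc cc.
have := rot_uniq i c; have := rot_cycle i e' c; have := size_rot i c.
rewrite rotE uc cc; case: s {rotE} => [|[x1|] s] //= sz.
rewrite rcons_path => /and3P[/contr_rel_NoneP[p pX ex1] ps eaN] /and3P[].
rewrite inE negb_or => /andP[_ Ns] x1s _.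
have : last (Some x1) s \in s.
  by move: sc; rewrite -sz; case: s {ps eaN Ns x1s sz} => // y s _; exact: (mem_last y s).
case aE : (last (Some x1) s) eaN => [xk|] eaN as_; last by rewrite as_ in Ns.
move: eaN; rewrite contr_rel_sym => /contr_rel_NoneP[q qX exkq].
have cW := contr_path_connect ps Ns aE.
have dX : [disjoint X & ~: X] by rewrite disjoints_subset setCK.
have x1W : val x1 \in ~: X by rewrite in_setC contr_val_notin.
have exkq' : e (val xk) q by rewrite esym.
have [_ /val_inj x1k] := acyclic_crossing_edge acyc dX qX x1W (Xconn qX pX) cW ex1 exkq'.
by rewrite x1k as_ in x1s.
Qed.

End Contraction.

Lemma in_TT_cubic_transversal (T : finType) (e : rel T) :
  in_TT e -> cubic_transversal e (GE_A e) /\ GE_D e = ~: GE_A e.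
Proof. by case=> -[esym eirr T0 conn acyc] degA nuT; apply: cubic_transversal_GE_A. Qed.

Lemma cubic_transversal_in_TT (T : finType) (e : rel T) (P : {set T}) :
  is_tree e -> cubic_transversal e P -> [/\ in_TT e, GE_D e = ~: P & GE_A e = P].
Proof.
move=> tree [P_cross P_deg]; have [esym eirr T0 conn acyc] := tree.
have [x0 _] := card_gt0P T0.
have GA := GE_A_transversal esym eirr conn acyc P_cross P_deg x0.
have nuP := nu_transversal esym eirr conn acyc P_cross P_deg x0.
have cardT := card_transversal esym eirr conn acyc P_cross P_deg x0.
split; [split => // [a | ] | exact: GE_D_transversal x0 | by []].
  by rewrite GA => aP; rewrite P_deg.
by rewrite nuP cardT addnK.
Qed.

Section ContractionTree.
Variables (T : finType) (e : rel T) (X : {set T}).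
Local Notation e' := (contr_rel e X).
Local Notation proj := (contr_proj X).
Hypothesis tree : is_tree e.
Hypothesis Xconn : forall z z', z \in X -> z' \in X -> connect (induced e X) z z'.

Lemma contr_is_tree x0 : x0 \in X -> is_tree e'.
Proof.
move=> x0X; have [esym eirr _ conn acyc] := tree.
split; first exact: contr_rel_sym.
- exact: contr_rel_irr.
- by apply/card_gt0P; exists None.
- exact: contr_connect x0X conn.
exact: contr_acyclic.
Qed.

Lemma mem_contr_proj_setD (P : {set T}) a :
  (a \in proj @: (P :\: X)) = if a is Some s then val s \in P else false.
Proof.
apply/imsetP/idP => [[x /setDP[xP xX] ->] | ].
  case E : (proj x) => [s|]; first by rewrite (contr_proj_Some E).
  by rewrite -contr_proj_eqNone E in xX.
case: a => [s sP|] //; exists (val s); last by rewrite contr_projK.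
by rewrite inE sP contr_val_notin.
Qed.

Lemma setC_contr_proj (P : {set T}) :
  ~: (proj @: (P :\: X)) = None |: proj @: (~: P :\: X).
Proof.
by apply/setP => -[s|]; rewrite !inE ?mem_contr_proj_setD ?inE.
Qed.

Lemma contr_cubic_transversal (P : {set T}) : cubic_transversal e P ->
  (forall x y, x \in X -> y \notin X -> e x y -> x \notin P) ->
  cubic_transversal e' (proj @: (P :\: X)).
Proof.
have [esym eirr _ _ acyc] := tree.
move=> [P_cross P_deg] Xbd; split => [a b | [s|]]; rewrite ?mem_contr_proj_setD //.
  2: by rewrite (contr_deg esym eirr acyc Xconn) => /P_deg.
case/contr_relP=> ab [x [y [exy xa yb]]].
have other u v : u \in X -> v \notin X -> e u v -> v \in P.
  move=> uX vX euv; move: (P_cross _ _ euv).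
  by rewrite (negbTE (Xbd _ _ uX vX euv)); case: (v \in P).
case: a b ab xa yb => [s|] [t|] // _.
- by move=> /contr_proj_Some -> /contr_proj_Some ->; apply: P_cross.
- move=> /contr_proj_Some xE /eqP; rewrite contr_proj_eqNone => yX.
  by rewrite (other y) ?contr_val_notin // xE esym.
- move=> /eqP; rewrite contr_proj_eqNone => xX /contr_proj_Some yE.
  by rewrite (other x) ?contr_val_notin // yE.
Qed.

End ContractionTree.

Lemma double_star_connected (T : finType) (e : rel T) (v1 v2 u : T) (X : {set T}) :
  symmetric e -> e v1 u -> e v2 u -> X = [set v1; v2] :|: (nbhd e v1 :|: nbhd e v2) ->
  forall z z', z \in X -> z' \in X -> connect (induced e X) z z'.
Proof.
move=> esym e1u e2u XE.
have v1X : v1 \in X by rewrite XE !inE eqxx.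
have v2X : v2 \in X by rewrite XE !inE eqxx orbT.
have uX : u \in X by rewrite XE !inE e1u !orbT.
have step x y : x \in X -> y \in X -> e x y -> connect (induced e X) x y.
  by move=> xX yX exy; apply: connect1; rewrite /induced xX yX.
have hub z : z \in X -> connect (induced e X) z u.
  move=> zX; move: (zX); rewrite {1}XE => /setUP[/set2P[] -> | /setUP[] /[!inE] ez].
  - exact: step.
  - exact: step.
  - by apply: connect_trans (step _ _ zX v1X _) (step _ _ v1X uX e1u); rewrite esym.
  - by apply: connect_trans (step _ _ zX v2X _) (step _ _ v2X uX e2u); rewrite esym.
move=> z z' zX z'X; apply: connect_trans (hub z zX) _.
by rewrite connect_induced_sym //; apply: hub.
Qed.

Lemma double_star_transversal (T : finType) (e : rel T) (P X : {set T}) (v1 v2 : T) :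
  (forall x y, e x y -> (x \in P) != (y \in P)) -> v1 \in P -> v2 \in P ->
  X = [set v1; v2] :|: (nbhd e v1 :|: nbhd e v2) ->
  X :&: P = [set v1; v2] /\ (forall x y, x \in X -> y \notin X -> e x y -> x \notin P).
Proof.
move=> P_cross v1P v2P XE.
have nbP v w : v \in P -> e v w -> w \notin P by move=> vP /P_cross; rewrite vP; case: (w \in P).
have XP : X :&: P = [set v1; v2].
  apply/setP => z; rewrite inE XE !inE.
  have [-> | zv1] /= := eqVneq z v1; first by rewrite v1P.
  have [-> | zv2] /= := eqVneq z v2; first by rewrite v2P.
  apply/negbTE/andP => -[/orP[] /nbP zP].
    by rewrite (negbTE (zP v1P)).
  by rewrite (negbTE (zP v2P)).
split => // x y xX yX exy; apply: contraNN yX => xP.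
have : x \in X :&: P by rewrite inE xX xP.
by rewrite XP XE !inE => /orP[] /eqP <-; rewrite exy !orbT.
Qed.

Theorem lemma4 (T : finType) (e : rel T) (v1 v2 u1 u2 u3 u4 u5 : T) :
  in_TT e ->
  v1 \in GE_A e -> v2 \in GE_A e ->
  uniq [:: u1; u2; u3; u4; u5] ->
  nbhd e v1 = [set u1; u2; u5] ->
  nbhd e v2 = [set u3; u4; u5] ->
  let X := [set v1; v2; u1; u2; u3; u4; u5] in
  let e' := contr_rel e X in
  [/\ in_TT e',
      GE_D e' = None |: [set contr_proj X x | x in GE_D e :\: (nbhd e v1 :|: nbhd e v2)] &
      GE_A e' = [set contr_proj X x | x in GE_A e :\: [set v1; v2]]].
Proof.
move=> TT v1A v2A _ N1 N2 X e'.
have [tree _ _] := TT; have [esym _ _ _ _] := tree.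
have [AT DA] := in_TT_cubic_transversal TT; have [A_cross _] := AT.
have XE : X = [set v1; v2] :|: (nbhd e v1 :|: nbhd e v2).
  by rewrite N1 N2; apply/setP => z; rewrite !inE; do !case: eqP.
have /[!inE] e1u5 : u5 \in nbhd e v1 by rewrite N1 !inE eqxx !orbT.
have /[!inE] e2u5 : u5 \in nbhd e v2 by rewrite N2 !inE eqxx !orbT.
have Xconn := double_star_connected esym e1u5 e2u5 XE.
have [XA Xbd] := double_star_transversal A_cross v1A v2A XE.
have v1X : v1 \in X by rewrite XE !inE eqxx.
have [TT' -> ->] := cubic_transversal_in_TT (contr_is_tree tree Xconn v1X)
  (contr_cubic_transversal tree Xconn AT Xbd).
rewrite setC_contr_proj -DA; split => //.
  rewrite XE setDUr (setIidPr _) //; apply/subsetP => z /setDP[zD _].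
  rewrite in_setD in_set2 zD andbT negb_or.
  by apply/andP; split; apply: contraTneq zD => ->; rewrite DA in_setC ?v1A ?v2A.
by rewrite -XA setDIr setDv setU0.
Qed.
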